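(* Let $r\geq 3$. If a $2$-connected $r$-graph $G$ has a $2$-vertex-cut, then either $G$ has a non-trivial tight edge-cut or the underlying simple graph $G_s$ is a circuit of length $4$.
   Context: Graphs are finite, may have parallel edges but no loops. $\partial_G(X)$ is the set of edges with exactly one end in $X\subseteq V(G)$. An $r$-graph is an $r$-regular graph $G$ with $|\partial_G(X)|\geq r$ for every $X\subseteq V(G)$ of odd cardinality. An edge-cut $\partial_G(X)$ of an $r$-graph $G$ is a non-trivial tight edge-cut if $|X|$ is odd, $|\partial_G(X)|=r$, and $|X|>1$ and $|V(G)\setminus X|>1$. $G_s$ is the underlying simple graph of $G$. A $2$-vertex-cut is a set of $2$ vertices whose removal increases the number of components. *)

(* A loopless multigraph on a finite vertex type V is encoded
   by its multiplicity function m : V -> V -> nat (m u v = number of parallel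
   edges between u and v), symmetric and zero on the diagonal. *)
From mathcomp Require Import all_boot.
Set Implicit Arguments. Unset Strict Implicit. Unset Printing Implicit Defensive.

Section Graphs.
Variable V : finType.
Implicit Types (m : V -> V -> nat) (X S : {set V}).

Definition multigraph m := (forall u v, m u v = m v u) /\ (forall v, m v v = 0).

Definition deg m v := \sum_(u : V) m v u.

Definition cut m X := \sum_(u in X) \sum_(v in ~: X) m u v.

Definition r_graph (r : nat) m :=
  (forall v, deg m v = r) /\ (forall X, odd #|X| -> r <= cut m X).

Definition adj m : rel V := fun u v => 0 < m u v.

Definition restr m S : rel V := fun u v => [&& u \in S, v \in S & adj m u v].

Definition connected_on m S :=
  forall x y, x \in S -> y \in S -> connect (restr m S) x y.

Definition ncomp m S :=
  #|[set [set y in S | connect (restr m S) x y] | x in S]|.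

Definition two_connected m :=
  [/\ 3 <= #|V|, connected_on m [set: V] &
      forall v, connected_on m (~: [set v])].

Definition two_vertex_cut m x y :=
  x != y /\ ncomp m [set: V] < ncomp m (~: [set x; y]).

Definition nontrivial_tight_cut (r : nat) m X :=
  [/\ odd #|X|, cut m X = r, 1 < #|X| & 1 < #|~: X|].

Definition simple_C4 m :=
  exists a b c d : V,
    [/\ uniq [:: a; b; c; d], (forall v, v \in [:: a; b; c; d]) &
        forall u v, adj m u v =
          ((u, v) \in [:: (a, b); (b, a); (b, c); (c, b);
                          (c, d); (d, c); (d, a); (a, d)])].
End Graphs.

From mathcomp Require Import all_boot zify.
Set Implicit Arguments. Unset Strict Implicit. Unset Printing Implicit Defensive.

(* Let {x, y} be a 2-vertex-cut, A a component of G - x - y and B the rest of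
   G - x - y, so that no edge joins A and B, and write e(z, S) for the number
   of edges from z to S. Then deg x + deg y = 2r reads
   e(x,A) + e(y,A) + e(x,B) + e(y,B) + 2 m(x,y) = 2r, and since |V(G)| is even
   |A| and |B| have the same parity.
   If both are odd, the odd cuts of A and B have sizes e(x,A) + e(y,A) and
   e(x,B) + e(y,B), both at least r; hence both equal r and m(x,y) = 0. One of
   them is non-trivial unless A = {a} and B = {b}, and then 2-connectivity
   forces a and b to be adjacent to both x and y, so G_s is the circuit a x b y.
   If both are even, A + x and A + y are odd, and their cuts add up to
   deg x + deg y = 2r, so the cut of A + x is tight; it is non-trivial because
   A and B are non-empty. *)

Lemma connect_exists_step (T : finType) (e : rel T) p q :
  connect e p q -> p != q -> exists v, e p v.
Proof.
move=> /connectP [[|v s] /= pth ->]; first by rewrite eqxx.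
by case/andP: pth => epv _ _; exists v.
Qed.

Section Separation.
Variable V : finType.
Variable m : V -> V -> nat.
Hypothesis msym : forall u v, m u v = m v u.
Implicit Types (x y z : V) (A B S : {set V}).

Definition deg_in z S := \sum_(v in S) m z v.

Definition separation x y A B :=
  [/\ x != y, x \notin B, y \notin B, ~: A = x |: (y |: B)
    & {in A & B, forall u v, m u v = 0}].

Lemma separation_swap x y A B : separation x y A B -> separation y x A B.
Proof. by case=> xy xB yB defA noAB; split; rewrite 1?eq_sym // setUCA. Qed.

Lemma separation_notin x y A B :
  separation x y A B -> x \notin A /\ y \notin A.
Proof.
case=> _ _ _ defA _.
by rewrite -!in_setC defA !inE !eqxx orbT.
Qed.

Lemma separation_sym x y A B : separation x y A B -> separation x y B A.
Proof.
move=> sep; have [xA yA] := separation_notin sep.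
case: sep => xy xB yB defA noAB; split => //; last first.
  by move=> u v uB vA; rewrite msym noAB.
apply/setP => v; move/setP/(_ v): defA; rewrite !inE.
have [->|vx] := eqVneq v x; first by rewrite (negbTE xA) (negbTE xB).
have [->|vy] := eqVneq v y; first by rewrite (negbTE yA) (negbTE yB).
by rewrite /= => <-; rewrite negbK.
Qed.

Lemma two_vertex_cut_separation x y : two_vertex_cut m x y ->
  exists A B, [/\ separation x y A B, A != set0 & B != set0].
Proof.
case=> xy; set S := ~: [set x; y] => ncompS.
have inS z : (z \in S) = (z != x) && (z != y) by rewrite !inE negb_or.
clearbody S.
have restr_sym : symmetric (restr m S).
  by move=> u v; rewrite /restr /adj msym andbCA.
have : 1 < ncomp m S.
  apply: leq_ltn_trans ncompS; apply/card_gt0P.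
  exists [set z in [set: V] | connect (restr m setT) x z].
  by apply/imsetP; exists x.
case/card_gt1P=> _ [_ [/imsetP[a aS ->] /imsetP[b bS ->] comp_ab]].
have nab : ~~ connect (restr m S) a b.
  apply: contra comp_ab => cab; apply/eqP/setP => z.
  by rewrite !inE (same_connect (sym_connect_sym restr_sym) cab).
pose A := [set z in S | connect (restr m S) a z].
exists A, (S :\: A); split.
- split => //; try by rewrite !inE inS eqxx ?andbF.
    apply/setP => v; rewrite !inE inS.
    by case: (v == x); case: (v == y); case: (connect _ a v).
  move=> u v; rewrite !inE => /andP[uS au] /andP[+ vS]; rewrite vS /= => nav.
  apply/eqP; rewrite eqn0Ngt; apply: contra nav => muv.
  by apply: connect_trans au (connect1 _); rewrite /restr uS vS /adj muv.
- by apply/set0Pn; exists a; rewrite inE aS connect0.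
- by apply/set0Pn; exists b; rewrite !inE bS nab.
Qed.

Section Counting.
Variables (x y : V) (A B : {set V}).
Hypothesis sep : separation x y A B.

Lemma setC_setU1_sep : ~: (x |: A) = y |: B.
Proof.
case: sep => xy xB yB defA _.
apply/setP => v; move/setP/(_ v): defA; rewrite !inE negb_or => ->.
by have [->|] := eqVneq v x; rewrite ?(negbTE xB) ?(negbTE xy).
Qed.

Lemma big_setC_sep (f : V -> nat) :
  \sum_(v in ~: A) f v = f x + f y + \sum_(v in B) f v.
Proof.
case: sep => xy xB yB defA _.
by rewrite defA !big_setU1 /= ?addnA // !inE negb_or xy.
Qed.

Lemma card_sep : #|A| + #|B| + 2 = #|V|.
Proof.
case: sep => xy xB yB defA _.
by rewrite -(cardsC A) defA !cardsU1 !inE negb_or xy xB yB /=; lia.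
Qed.

Lemma cut_sep : cut m A = deg_in x A + deg_in y A.
Proof.
case: (sep) => _ _ _ _ noAB.
rewrite /cut /deg_in -big_split /=; apply: eq_bigr => u uA.
by rewrite big_setC_sep big1 ?addn0 ?(msym x) ?(msym y) // => v; apply: noAB.
Qed.

Lemma cut_setU1_sep : cut m (x |: A) = m x y + deg_in x B + deg_in y A.
Proof.
have [xA _] := separation_notin sep; case: (sep) => _ _ yB _ noAB.
rewrite /cut /deg_in big_setU1 //= setC_setU1_sep big_setU1 //=.
congr (_ + _); apply: eq_bigr => u uA.
by rewrite big_setU1 //= big1 ?addn0 1?msym // => v; apply: noAB.
Qed.

Lemma deg_sep : m x x = 0 -> deg m x = deg_in x A + m x y + deg_in x B.
Proof.
move=> mxx; rewrite /deg /deg_in (bigID (mem A)) /=.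
rewrite [X in _ + X](eq_bigl (mem (~: A))); last by move=> v /=; rewrite !inE.
by rewrite big_setC_sep mxx addnA.
Qed.

End Counting.

Hypothesis mloop : forall v, m v v = 0.

Lemma simple_C4_cycle a b c d :
  uniq [:: a; b; c; d] -> (forall v, v \in [:: a; b; c; d]) ->
  0 < m a b -> 0 < m b c -> 0 < m c d -> 0 < m d a ->
  m a c = 0 -> m b d = 0 -> simple_C4 m.
Proof.
move=> abcd cover mab mbc mcd mda mac mbd; exists a, b, c, d; split => // u v.
move: abcd; rewrite /= !inE !negb_or.
case/and4P=> /and3P[ab ac ad] /andP[bc bd] cd _.
move: (cover u) (cover v); rewrite !inE.
case/or4P=> /eqP-> /or4P[]/eqP->;
  rewrite /adj !xpair_eqE !eqxx ?mloop /= ?(eq_sym b a) ?(eq_sym c a)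
    ?(eq_sym d a) ?(eq_sym c b) ?(eq_sym d b) ?(eq_sym d c)
    ?(negbTE ab) ?(negbTE ac) ?(negbTE ad) ?(negbTE bc) ?(negbTE bd)
    ?(negbTE cd) ?(msym b a) ?(msym c b) ?(msym d c) ?(msym a d)
    ?(msym c a) ?(msym d b) ?mac ?mbd //=.
Qed.

Lemma sep_singleton_adj x y a B b :
  separation x y [set a] B -> b \in B -> connected_on m (~: [set y]) ->
  0 < m a x.
Proof.
case=> _ xB yB defA noAB bB con.
have bNa : b \in ~: [set a] by rewrite defA !inE bB !orbT.
have aNy : a \in ~: [set y].
  by rewrite !inE eq_sym -in_set1 -in_setC defA !inE eqxx orbT.
have bNy : b \in ~: [set y] by rewrite !inE; apply: contraNneq yB => <-.
have [v] : exists v, restr m (~: [set y]) a v.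
  apply: connect_exists_step (con a b aNy bNy) _.
  by rewrite eq_sym -in_set1 -in_setC.
rewrite /restr /adj !inE => /and3P[_ vy mav].
have : v \in ~: [set a].
  by rewrite !inE; apply: contraTneq mav => ->; rewrite mloop.
rewrite defA !inE (negbTE vy) /=; case/orP=> [/eqP<- //|vB].
by rewrite noAB ?inE in mav.
Qed.

Section RGraph.
Variable r : nat.
Hypothesis rg : r_graph r m.

Lemma r_graph_card_even : 0 < r -> ~~ odd #|V|.
Proof.
move=> r_gt0; apply/negP => oddV.
have cutT : cut m setT = 0.
  by rewrite /cut setCT; apply: big1 => u _; rewrite big_set0.
by have := rg.2 setT; rewrite cardsT cutT => /(_ oddV); rewrite leqNgt r_gt0.
Qed.

Lemma sep_odd_tight x y A B : separation x y A B -> odd #|A| -> odd #|B| ->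
  [/\ m x y = 0, cut m A = r & cut m B = r].
Proof.
move=> sep oA oB; have := rg.2 A oA; have := rg.2 B oB.
have := rg.1 x; have := rg.1 y.
rewrite (cut_sep sep) (cut_sep (separation_sym sep)).
rewrite (deg_sep sep (mloop x)) (deg_sep (separation_swap sep) (mloop y)).
rewrite (msym y).
move=> *; split; lia.
Qed.

Lemma sep_even_tight x y A B : separation x y A B -> ~~ odd #|A| ->
  cut m (x |: A) = r.
Proof.
move=> sep eA; have [xA yA] := separation_notin sep.
have := rg.2 (x |: A); have := rg.2 (y |: A).
rewrite !cardsU1 xA yA /= (negbTE eA) => /(_ isT) + /(_ isT).
have := rg.1 x; have := rg.1 y.
rewrite (cut_setU1_sep sep) (cut_setU1_sep (separation_swap sep)).
rewrite (deg_sep sep (mloop x)) (deg_sep (separation_swap sep) (mloop y)).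
rewrite (msym y).
lia.
Qed.

Lemma sep_singletons_C4 x y a b :
  separation x y [set a] [set b] -> m x y = 0 ->
  (forall z, connected_on m (~: [set z])) -> simple_C4 m.
Proof.
move=> sep mxy con; have sepB := separation_sym sep.
have a_b : a \in [set a] /\ b \in [set b] by rewrite !inE.
case: (sep) => xy xb yb defA noAB.
apply: (@simple_C4_cycle a x b y).
- have : [/\ x \in ~: [set a], y \in ~: [set a] & b \in ~: [set a]].
    by rewrite defA !inE !eqxx !orbT.
  rewrite !inE in xb yb *; case=> xa ya ba.
  by rewrite /= !inE !negb_or !(eq_sym a) (eq_sym b y) xa ya ba xb yb xy.
- move=> v; have : (v \in [set a]) || (v \in ~: [set a]).
    by rewrite in_setC orbN.
  by rewrite defA !inE => /orP[->|/or3P[]->]; rewrite ?orbT.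
- exact: sep_singleton_adj sep a_b.2 (con y).
- by rewrite msym; apply: sep_singleton_adj sepB a_b.1 (con y).
- exact: sep_singleton_adj (separation_swap sepB) a_b.1 (con x).
- by rewrite msym; apply: sep_singleton_adj (separation_swap sep) a_b.2 (con x).
- by apply: noAB; rewrite inE.
- exact: mxy.
Qed.

Lemma sep_tight_or_C4 x y A B :
  0 < r -> (forall z, connected_on m (~: [set z])) ->
  separation x y A B -> A != set0 -> B != set0 ->
  (exists X, nontrivial_tight_cut r m X) \/ simple_C4 m.
Proof.
move=> r_gt0 con sep; rewrite -!card_gt0 => A_gt0 B_gt0.
have [xA _] := separation_notin sep.
have cardV := card_sep sep; have cardCA := cardsC A; have cardCB := cardsC B.
have parity : odd #|A| = odd #|B|.
  have := r_graph_card_even r_gt0.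
  by rewrite -cardV !oddD; case: (odd #|A|); case: (odd #|B|).
case oA : (odd #|A|); last first.
  left; exists (x |: A); split.
  - by rewrite cardsU1 xA /= oA.
  - by rewrite (sep_even_tight sep) ?oA.
  - by rewrite cardsU1 xA; lia.
  - have [_ yB] := separation_notin (separation_sym sep).
    by rewrite (setC_setU1_sep sep) cardsU1 yB; lia.
have oB : odd #|B| by rewrite -parity.
have [mxy cutA cutB] := sep_odd_tight sep oA oB.
have [A_gt1|A_le1] := ltnP 1 #|A|; first by left; exists A; split => //; lia.
have [B_gt1|B_le1] := ltnP 1 #|B|; first by left; exists B; split => //; lia.
have /cards1P[a defA] : #|A| == 1 by rewrite eqn_leq A_le1.
have /cards1P[b defB] : #|B| == 1 by rewrite eqn_leq B_le1.
by right; rewrite defA defB in sep; apply: sep_singletons_C4 sep mxy con.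
Qed.

End RGraph.
End Separation.

Theorem lemma2p5 (r : nat) (V : finType) (m : V -> V -> nat) :
  3 <= r -> multigraph m -> r_graph r m -> two_connected m ->
  (exists x y : V, two_vertex_cut m x y) ->
  (exists X : {set V}, nontrivial_tight_cut r m X) \/ simple_C4 m.
Proof.
move=> r_ge3 [msym mloop] rg [_ _ con] [x [y cut_xy]].
have [A [B [sep A0 B0]]] := two_vertex_cut_separation msym cut_xy.
apply: (sep_tight_or_C4 msym mloop rg _ con sep A0 B0).
exact: leq_trans r_ge3.
Qed.
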